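(* Let $U\colon[0,1]^2\to[0,1]$ be a uninorm with neutral element $e\in(0,1)$ such that $U\in\mathcal U$ and $U\in\mathcal N_{\min}$ (respectively $U\in\mathcal N_{\max}$). If $U$ has no idempotent points in $(e,1)$ (respectively in $(0,e)$), then $U$ is irreducible with respect to the ordinal sum construction.
   Context: A uninorm is a commutative, associative binary operation on $[0,1]$, non-decreasing in each variable, with a neutral element; ''broad sense'' allows neutral element $e\in[0,1]$ (t-norm if $e=1$, t-conorm if $e=0$), and a proper uninorm has $e\in(0,1)$. Conjunctive: $U(1,0)=0$; disjunctive: $U(1,0)=1$. Underlying t-norm $T_U(x,y)=U(ex,ey)/e$, underlying t-conorm $C_U(x,y)=(U(e+(1-e)x,e+(1-e)y)-e)/(1-e)$. $\mathcal U$: uninorms with continuous $T_U$ and $C_U$. $\mathcal N$: uninorms $V$ with $V(x,0)=0$ for all $x\in[0,1)$ and $V(x,1)=1$ for all $x\in(0,1]$. $\mathcal U_{\min}$ ($\mathcal U_{\max}$): uninorms $U_1$ with neutral element $e_1$ such that $U_1(x,y)=\min(x,y)$ (resp. $\max(x,y)$) for all $(x,y)\in[0,1]^2\setminus([0,e_1]^2\cup[e_1,1]^2)$. $\mathcal N_{\min}$ ($\mathcal N_{\max}$): uninorms $U\in\mathcal N$ for which there is $U_1\in\mathcal U_{\min}$ ($U_1\in\mathcal U_{\max}$) with $U=U_1$ on $(0,1)^2$. An idempotent point of $U$ is $x$ with $U(x,x)=x$. Ordinal sum construction: transformation: for a uninorm $W$ with neutral $e'$, $0\le a\le b<c\le d\le1$,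 $v\in[b,c]$: $f(x)=a+(b-a)x/e'$ on $[0,e')$, $f(e')=v$, $f(x)=d-(1-x)(d-c)/(1-e')$ on $(e',1]$; $W^{a,b,c,d}_v(x,y)=f(W(f^{-1}(x),f^{-1}(y)))$ on $([a,b)\cup\{v\}\cup(c,d])^2$ (if $a=b$, resp. $c=d$, only the part on $[e',1]^2$, resp. $[0,e']^2$, is transported). Data: $K$ countable; $((a_k,b_k))_k$ pairwise disjoint open (possibly empty) subintervals of $[0,e]$ with $\bigcup_k[a_k,b_k]=[0,e]$, $((c_k,d_k))_k$ likewise in $[e,1]$ with $\bigcup_k[c_k,d_k]=[e,1]$; $b_k\le a_i\iff c_k\ge d_i$ for all $i,k$; $U_k$ a proper uninorm if both intervals non-empty, a t-norm or proper uninorm if $(a_k,b_k)\ne\emptyset$, a t-conorm or proper uninorm if $(c_k,d_k)\ne\emptyset$; if both are empty there is no $k_1\ne k$ with $a_k=b_k=a_{k_1}=b_{k_1}$, $c_k=d_k=c_{k_1}=d_{k_1}$. $B=\{b_k\}\setminus\{a_k\}$, $C=\{c_k\}\setminus\{d_k\}$, $n(b_k)=b_k$ if $U_k(1,0)=0$ else $c_k$; $v_k=c_k$ (resp. $b_k$) if some $i$ has $b_k=a_i$ with $U_i$ disjunctive (resp. conjunctive), $v_k=n(b_k)$ if $b_k\in B,c_k\in C$, $v_k=b_k$ if $b_k\in B,c_k\notin C$, $v_k=c_k$ if $b_k\notin B,c_k\in C$. The ordinal sum $(\langle a_k,b_k,c_k,d_k,U_k\rangle\mid k\in K)^e$ is: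 $y$ if $x=e$; $x$ if $y=e$; $(U_k)^{a_k,b_k,c_k,d_k}_{v_k}(x,y)$ on $([a_k,b_k)\cup(c_k,d_k])^2$; $x$ if $y\in[b_k,c_k]$, $x\in[a_k,d_k]\setminus[b_k,c_k]$; $y$ symmetrically; $\min(x,y)$ if $(x,y)\in[b_k,c_k]^2\setminus((b_k,c_k)^2\cup\{(b_k,c_k),(c_k,b_k)\})$, $b_k\in B,c_k\in C$, $x+y<b_k+c_k$; $\max(x,y)$ likewise with $x+y>b_k+c_k$; $n(b_k)$ at $(b_k,c_k),(c_k,b_k)$ when $b_k\in B,c_k\in C$; $\min(x,y)$ on $\{b_k\}\times[b_k,c_k]\cup[b_k,c_k]\times\{b_k\}$ when $b_k\in B,c_k\notin C$; $\max(x,y)$ on $\{c_k\}\times[b_k,c_k]\cup[b_k,c_k]\times\{c_k\}$ when $b_k\notin B,c_k\in C$. A summand is empty if $a_k=b_k$ and $c_k=d_k$. A uninorm $U$ with neutral element $e$ is irreducible with respect to the ordinal sum construction if it can be expressed only as a trivial ordinal sum, i.e., in every representation of $U$ as such an ordinal sum the only non-empty summand is defined on $([0,e)\cup(e,1])^2$, i.e. on all of $[0,1]^2$. *)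

From Stdlib Require Import Reals.
Open Scope R_scope.

Definition inI (x : R) : Prop := 0 <= x <= 1.

(* U is a uninorm (broad sense) with neutral element e: operation on [0,1]. *)
Definition uninorm (U : R -> R -> R) (e : R) : Prop :=
  inI e /\
  (forall x y, inI x -> inI y -> inI (U x y)) /\
  (forall x y, inI x -> inI y -> U x y = U y x) /\
  (forall x y z, inI x -> inI y -> inI z -> U (U x y) z = U x (U y z)) /\
  (forall x x' y, inI x -> inI x' -> inI y -> x <= x' -> U x y <= U x' y) /\
  (forall x y y', inI x -> inI y -> inI y' -> y <= y' -> U x y <= U x y') /\
  (forall x, inI x -> U e x = x /\ U x e = x).

Definition conjunctive (U : R -> R -> R) : Prop := U 1 0 = 0.
Definition disjunctive (U : R -> R -> R) : Prop := U 1 0 = 1.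

Definition continuous_on_unit_square (F : R -> R -> R) : Prop :=
  forall x y, inI x -> inI y -> forall eps, 0 < eps ->
    exists delta, 0 < delta /\
      forall x' y', inI x' -> inI y' -> Rabs (x' - x) < delta -> Rabs (y' - y) < delta ->
        Rabs (F x' y' - F x y) < eps.

Definition underlying_tnorm (U : R -> R -> R) (e : R) : R -> R -> R :=
  fun x y => U (e * x) (e * y) / e.
Definition underlying_tconorm (U : R -> R -> R) (e : R) : R -> R -> R :=
  fun x y => (U (e + (1 - e) * x) (e + (1 - e) * y) - e) / (1 - e).

Definition in_calU (U : R -> R -> R) (e : R) : Prop :=
  continuous_on_unit_square (underlying_tnorm U e) /\
  continuous_on_unit_square (underlying_tconorm U e).

Definition in_calN (U : R -> R -> R) : Prop :=
  (forall x, 0 <= x < 1 -> U x 0 = 0) /\ (forall x, 0 < x <= 1 -> U x 1 = 1).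

Definition in_Umin (U1 : R -> R -> R) (e1 : R) : Prop :=
  uninorm U1 e1 /\
  forall x y, inI x -> inI y ->
    ~ ((x <= e1 /\ y <= e1) \/ (e1 <= x /\ e1 <= y)) -> U1 x y = Rmin x y.
Definition in_Umax (U1 : R -> R -> R) (e1 : R) : Prop :=
  uninorm U1 e1 /\
  forall x y, inI x -> inI y ->
    ~ ((x <= e1 /\ y <= e1) \/ (e1 <= x /\ e1 <= y)) -> U1 x y = Rmax x y.

Definition in_Nmin (U : R -> R -> R) : Prop :=
  in_calN U /\ exists U1 e1, in_Umin U1 e1 /\
    forall x y, 0 < x < 1 -> 0 < y < 1 -> U x y = U1 x y.
Definition in_Nmax (U : R -> R -> R) : Prop :=
  in_calN U /\ exists U1 e1, in_Umax U1 e1 /\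
    forall x y, 0 < x < 1 -> 0 < y < 1 -> U x y = U1 x y.

Definition idempotent_point (U : R -> R -> R) (x : R) : Prop := U x x = x.

(* inverse of the transformation f, on [a,b) \cup (c,d] *)
Definition tr_inv (e' a b c d x : R) : R :=
  if Rlt_dec x b then e' * (x - a) / (b - a)
  else 1 - (d - x) * (1 - e') / (d - c).

Definition tr_fwd (e' a b c d v z : R) : R :=
  if Rlt_dec z e' then a + (b - a) * z / e'
  else if Req_EM_T z e' then v
  else d - (1 - z) * (d - c) / (1 - e').

Definition transport (W : R -> R -> R) (e' a b c d v x y : R) : R :=
  tr_fwd e' a b c d v (W (tr_inv e' a b c d x) (tr_inv e' a b c d y)).

Section OS.
Variables (e : R) (K : nat -> Prop) (a b c d : nat -> R)
          (W : nat -> R -> R -> R) (ew : nat -> R) (v : nat -> R).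

(* admissible data of an ordinal sum with neutral element e;
   K \subseteq nat is the (countable) index set, W k is U_k with neutral element ew k *)
Definition os_data_ok : Prop :=
  (forall k, K k -> 0 <= a k <= b k /\ b k <= e) /\
  (forall k, K k -> e <= c k <= d k /\ d k <= 1) /\
  (forall k i, K k -> K i -> k <> i -> forall x, ~ ((a k < x < b k) /\ (a i < x < b i))) /\
  (forall k i, K k -> K i -> k <> i -> forall x, ~ ((c k < x < d k) /\ (c i < x < d i))) /\
  (forall x, 0 <= x <= e -> exists k, K k /\ a k <= x <= b k) /\
  (forall x, e <= x <= 1 -> exists k, K k /\ c k <= x <= d k) /\
  (forall i k, K i -> K k -> (b k <= a i <-> d i <= c k)) /\
  (forall k, K k ->
     uninorm (W k) (ew k) /\
     (a k < b k -> c k < d k -> 0 < ew k < 1) /\   (* proper uninorm *)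
     (a k < b k -> 0 < ew k) /\                    (* t-norm or proper uninorm *)
     (c k < d k -> ew k < 1)) /\                   (* t-conorm or proper uninorm *)
  (forall k k1, K k -> K k1 -> k <> k1 -> a k = b k -> c k = d k ->
     ~ (a k1 = b k1 /\ c k1 = d k1 /\ a k = a k1 /\ c k = c k1)).

Definition inB (x : R) : Prop :=
  (exists k, K k /\ b k = x) /\ ~ (exists k, K k /\ a k = x).
Definition inC (x : R) : Prop :=
  (exists k, K k /\ c k = x) /\ ~ (exists k, K k /\ d k = x).

Definition nval (k : nat) : R := if Req_EM_T (W k 1 0) 0 then b k else c k.

Definition v_ok : Prop :=
  forall k, K k ->
    let P1 := exists i, K i /\ b k = a i /\ disjunctive (W i) in
    let P2 := exists i, K i /\ b k = a i /\ conjunctive (W i) in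
    b k <= v k <= c k /\
    (P1 -> v k = c k) /\
    (~ P1 -> P2 -> v k = b k) /\
    (~ P1 -> ~ P2 -> inB (b k) -> inC (c k) -> v k = nval k) /\
    (~ P1 -> ~ P2 -> inB (b k) -> ~ inC (c k) -> v k = b k) /\
    (~ P1 -> ~ P2 -> ~ inB (b k) -> inC (c k) -> v k = c k).

Definition inHalf (k : nat) (x : R) : Prop := (a k <= x < b k) \/ (c k < x <= d k).

Definition sq_edge (k : nat) (x y : R) : Prop :=
  b k <= x <= c k /\ b k <= y <= c k /\ ~ (b k < x < c k /\ b k < y < c k) /\
  ~ (x = b k /\ y = c k) /\ ~ (x = c k /\ y = b k).

Definition is_ordinal_sum (U : R -> R -> R) : Prop :=
  forall x y, inI x -> inI y ->
   (x = e -> U x y = y) /\ (y = e -> U x y = x) /\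
   forall k, K k ->
    (inHalf k x -> inHalf k y ->
       U x y = transport (W k) (ew k) (a k) (b k) (c k) (d k) (v k) x y) /\
    (b k <= y <= c k -> a k <= x <= d k -> ~ (b k <= x <= c k) -> U x y = x) /\
    (b k <= x <= c k -> a k <= y <= d k -> ~ (b k <= y <= c k) -> U x y = y) /\
    (inB (b k) -> inC (c k) -> sq_edge k x y -> x + y < b k + c k -> U x y = Rmin x y) /\
    (inB (b k) -> inC (c k) -> sq_edge k x y -> x + y > b k + c k -> U x y = Rmax x y) /\
    (inB (b k) -> inC (c k) -> ((x = b k /\ y = c k) \/ (x = c k /\ y = b k)) ->
       U x y = nval k) /\
    (inB (b k) -> ~ inC (c k) ->
       ((x = b k /\ b k <= y <= c k) \/ (y = b k /\ b k <= x <= c k)) -> U x y = Rmin x y) /\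
    (~ inB (b k) -> inC (c k) ->
       ((x = c k /\ b k <= y <= c k) \/ (y = c k /\ b k <= x <= c k)) -> U x y = Rmax x y).

End OS.

Definition irreducible (U : R -> R -> R) (e : R) : Prop :=
  forall (K : nat -> Prop) (a b c d : nat -> R) (W : nat -> R -> R -> R) (ew v : nat -> R),
    os_data_ok e K a b c d W ew ->
    v_ok K a b c d W v ->
    is_ordinal_sum e K a b c d W ew v U ->
    forall k, K k -> (a k < b k \/ c k < d k) ->
      a k = 0 /\ b k = e /\ c k = e /\ d k = 1.

From Stdlib Require Import Reals Lra Lia.
Open Scope R_scope.

(* The outer endpoints [a k] and [d k] of a non-empty half of a summand are idempotent.
   In the [N_min] case there are no idempotents in [(e,1)], so every summand with a
   non-empty upper half has [d k = 1]; it then gives [U x y = x] for [y] in [[b k, c k]]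
   and [x] in [(c k, 1)], which agrees with [U = min] on [(e,1) x (0,e)] only if
   [b k = e].  Countably many summands cannot all be degenerate on an interval, so
   non-empty summands meet [(e, c k)] and [(0, a k)]; disjointness and [U t 1 = 1] then
   force [c k = e] and [a k = 0].  The same covering argument on [(e,1)] shows that every
   non-empty summand has a non-empty upper half.  The [N_max] case is dual. *)

Section AvoidingSequence.
Variables (f : nat -> R) (p q : R).
Hypothesis Hpq : p < q.

(* Nested intervals, the [n+1]-st excluding [f n]: their common point avoids [f]. *)
Fixpoint avoiding_interval (n : nat) : R * R :=
  match n with
  | O => (p + (q - p) / 4, q - (q - p) / 4)
  | S m => let (l, r) := avoiding_interval m in
           if Rle_dec (f m) ((l + r) / 2) then (l + 2 * (r - l) / 3, r)
           else (l, l + (r - l) / 3)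
  end.

Lemma avoiding_interval_lt n : fst (avoiding_interval n) < snd (avoiding_interval n).
Proof.
  induction n as [|n IH]; simpl; [lra|].
  destruct (avoiding_interval n) as [l r]; simpl in IH.
  destruct (Rle_dec (f n) ((l + r) / 2)); simpl; lra.
Qed.

Lemma avoiding_interval_S n :
  fst (avoiding_interval n) <= fst (avoiding_interval (S n)) /\
  snd (avoiding_interval (S n)) <= snd (avoiding_interval n) /\
  (f n < fst (avoiding_interval (S n)) \/ snd (avoiding_interval (S n)) < f n).
Proof.
  pose proof (avoiding_interval_lt n) as Hlt; simpl.
  destruct (avoiding_interval n) as [l r]; simpl in Hlt.
  destruct (Rle_dec (f n) ((l + r) / 2)); simpl; lra.
Qed.

Lemma avoiding_interval_nested m k :
  fst (avoiding_interval m) <= fst (avoiding_interval (m + k)) /\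
  snd (avoiding_interval (m + k)) <= snd (avoiding_interval m).
Proof.
  induction k as [|k IH]; rewrite ?Nat.add_0_r, ?Nat.add_succ_r; [lra|].
  pose proof (avoiding_interval_S (m + k)); lra.
Qed.

Lemma avoiding_interval_le m n : fst (avoiding_interval m) <= snd (avoiding_interval n).
Proof.
  destruct (Nat.le_ge_cases m n) as [Hmn|Hnm].
  - replace n with (m + (n - m))%nat by lia.
    pose proof (avoiding_interval_nested m (n - m)).
    pose proof (avoiding_interval_lt (m + (n - m))); lra.
  - replace m with (n + (m - n))%nat by lia.
    pose proof (avoiding_interval_nested n (m - n)).
    pose proof (avoiding_interval_lt (n + (m - n))); lra.
Qed.

Lemma exists_avoiding_sequence : exists x, p < x < q /\ forall n, f n <> x.
Proof.
  set (E := fun y => exists m, y = fst (avoiding_interval m)).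
  assert (HE : bound E).
  { exists (snd (avoiding_interval 0)); intros y [m ->]; apply avoiding_interval_le. }
  destruct (completeness E HE) as [x [Hub Hlub]].
  { exists (fst (avoiding_interval 0)), 0%nat; reflexivity. }
  assert (Hlow : forall m, fst (avoiding_interval m) <= x).
  { intro m; apply Hub; exists m; reflexivity. }
  assert (Hhigh : forall n, x <= snd (avoiding_interval n)).
  { intro n; apply Hlub; intros y [m ->]; apply avoiding_interval_le. }
  exists x; split.
  - pose proof (Hlow 0%nat); pose proof (Hhigh 0%nat); simpl in *; lra.
  - intros n Hn.
    pose proof (avoiding_interval_S n); pose proof (Hlow (S n)); pose proof (Hhigh (S n)); lra.
Qed.

End AvoidingSequence.


Lemma uninorm_one_one W e : uninorm W e -> W 1 1 = 1.
Proof.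
  intros [He [Hcl [_ [_ [_ [Hmono Hneu]]]]]].
  assert (I1 : inI 1) by (unfold inI; lra).
  pose proof (Hmono 1 e 1 I1 He I1 (proj2 He)).
  destruct (Hneu 1 I1) as [_ H1]; destruct (Hcl 1 1 I1 I1); lra.
Qed.

Lemma uninorm_zero_zero W e : uninorm W e -> W 0 0 = 0.
Proof.
  intros [He [Hcl [_ [_ [_ [Hmono Hneu]]]]]].
  assert (I0 : inI 0) by (unfold inI; lra).
  pose proof (Hmono 0 0 e I0 I0 He (proj1 He)).
  destruct (Hneu 0 I0) as [_ H0]; destruct (Hcl 0 0 I0 I0); lra.
Qed.

Lemma uninorm_neutral_eq U e U1 e1 :
  0 < e < 1 -> uninorm U e -> uninorm U1 e1 ->
  (forall x y, 0 < x < 1 -> 0 < y < 1 -> U x y = U1 x y) -> e1 = e.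
Proof.
  intros He [_ [_ [_ [_ [_ [_ Hneu]]]]]] [He1 [_ [_ [_ [Hmono1 [_ Hneu1]]]]]] Hagree.
  unfold inI in He1.
  assert (HeI : inI e) by (unfold inI; lra).
  destruct (Rlt_dec 0 e1) as [H0|H0]; destruct (Rlt_dec e1 1) as [H1|H1]; [| | |lra].
  - pose proof (Hagree e e1 He (conj H0 H1)).
    destruct (Hneu e1 ltac:(unfold inI; lra)) as [A _]; destruct (Hneu1 e HeI) as [_ B]; lra.
  - set (z := (1 + e) / 2).
    assert (Hz : inI z) by (unfold inI, z; lra).
    pose proof (Hagree z e ltac:(unfold z; lra) He).
    pose proof (Hmono1 z e1 e Hz ltac:(unfold inI; lra) HeI ltac:(unfold z; lra)).
    destruct (Hneu z Hz) as [_ A]; destruct (Hneu1 e HeI) as [B _]; unfold z in *; lra.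
  - set (z := e / 2).
    assert (Hz : inI z) by (unfold inI, z; lra).
    pose proof (Hagree z e ltac:(unfold z; lra) He).
    pose proof (Hmono1 e1 z e ltac:(unfold inI; lra) Hz HeI ltac:(unfold z; lra)).
    destruct (Hneu z Hz) as [_ A]; destruct (Hneu1 e HeI) as [B _]; unfold z in *; lra.
Qed.

Lemma Nmin_mixed U e : 0 < e < 1 -> uninorm U e -> in_Nmin U ->
  forall x y, e < x < 1 -> 0 < y < e -> U x y = y.
Proof.
  intros He Hu [_ [U1 [e1 [[Hu1 Hmin] Hagree]]]] x y Hx Hy.
  pose proof (uninorm_neutral_eq U e U1 e1 He Hu Hu1 Hagree); subst e1.
  rewrite Hagree, Hmin by (unfold inI in *; lra).
  apply Rmin_right; lra.
Qed.

Lemma Nmax_mixed U e : 0 < e < 1 -> uninorm U e -> in_Nmax U ->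
  forall x y, 0 < x < e -> e < y < 1 -> U x y = y.
Proof.
  intros He Hu [_ [U1 [e1 [[Hu1 Hmax] Hagree]]]] x y Hx Hy.
  pose proof (uninorm_neutral_eq U e U1 e1 He Hu Hu1 Hagree); subst e1.
  rewrite Hagree, Hmax by (unfold inI in *; lra).
  apply Rmax_right; lra.
Qed.


Section OrdinalSum.
Variables (U : R -> R -> R) (e : R) (K : nat -> Prop) (a b c d : nat -> R)
          (W : nat -> R -> R -> R) (ew v : nat -> R).
Hypothesis Hdata : os_data_ok e K a b c d W ew.
Hypothesis Hsum : is_ordinal_sum e K a b c d W ew v U.

Lemma os_bounds k : K k -> 0 <= a k <= b k /\ b k <= e <= c k /\ c k <= d k <= 1.
Proof.
  destruct Hdata as [Hab [Hcd _]]; intro Hk.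
  destruct (Hab k Hk), (Hcd k Hk); lra.
Qed.

Lemma os_absorb k x y : K k -> b k <= y <= c k -> a k <= x <= d k ->
  ~ (b k <= x <= c k) -> U x y = x.
Proof.
  intros Hk Hy Hx Hout; pose proof (os_bounds k Hk).
  destruct (Hsum x y ltac:(unfold inI; lra) ltac:(unfold inI; lra)) as [_ [_ Hsummand]].
  apply (Hsummand k Hk); assumption.
Qed.

Lemma os_idempotent_top k : K k -> c k < d k -> U (d k) (d k) = d k.
Proof.
  intros Hk Hlt; pose proof (os_bounds k Hk).
  destruct Hdata as [_ [_ [_ [_ [_ [_ [_ [HW _]]]]]]]].
  destruct (HW k Hk) as [Hu [_ [_ Hew]]]; specialize (Hew Hlt).
  destruct (Hsum (d k) (d k) ltac:(unfold inI; lra) ltac:(unfold inI; lra))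
    as [_ [_ Hsummand]].
  rewrite (proj1 (Hsummand k Hk)) by (unfold inHalf; lra).
  unfold transport, tr_inv.
  destruct (Rlt_dec (d k) (b k)); [lra|].
  replace (1 - (d k - d k) * (1 - ew k) / (d k - c k)) with 1 by (field; lra).
  rewrite (uninorm_one_one _ _ Hu); unfold tr_fwd.
  destruct (Rlt_dec 1 (ew k)); [lra|].
  destruct (Req_EM_T 1 (ew k)); [lra|].
  field; lra.
Qed.

Lemma os_idempotent_bot k : K k -> a k < b k -> U (a k) (a k) = a k.
Proof.
  intros Hk Hlt; pose proof (os_bounds k Hk).
  destruct Hdata as [_ [_ [_ [_ [_ [_ [_ [HW _]]]]]]]].
  destruct (HW k Hk) as [Hu [_ [Hew _]]]; specialize (Hew Hlt).
  destruct (Hsum (a k) (a k) ltac:(unfold inI; lra) ltac:(unfold inI; lra))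
    as [_ [_ Hsummand]].
  rewrite (proj1 (Hsummand k Hk)) by (unfold inHalf; lra).
  unfold transport, tr_inv.
  destruct (Rlt_dec (a k) (b k)); [|lra].
  replace (ew k * (a k - a k) / (b k - a k)) with 0 by (field; lra).
  rewrite (uninorm_zero_zero _ _ Hu); unfold tr_fwd.
  destruct (Rlt_dec 0 (ew k)); [|lra].
  field; lra.
Qed.

Lemma os_lower_disjoint k i : K k -> K i -> k <> i -> a k < b k -> a i < b i ->
  b k <= a i \/ b i <= a k.
Proof.
  intros Hk Hi Hki Hltk Hlti.
  destruct Hdata as [_ [_ [Hdisj _]]].
  destruct (Rle_dec (b k) (a i)), (Rle_dec (b i) (a k)); try tauto.
  exfalso; apply (Hdisj k i Hk Hi Hki ((Rmax (a k) (a i) + Rmin (b k) (b i)) / 2)).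
  unfold Rmax, Rmin; repeat destruct Rle_dec; lra.
Qed.

Lemma os_upper_disjoint k i : K k -> K i -> k <> i -> c k < d k -> c i < d i ->
  d k <= c i \/ d i <= c k.
Proof.
  intros Hk Hi Hki Hltk Hlti.
  destruct Hdata as [_ [_ [_ [Hdisj _]]]].
  destruct (Rle_dec (d k) (c i)), (Rle_dec (d i) (c k)); try tauto.
  exfalso; apply (Hdisj k i Hk Hi Hki ((Rmax (c k) (c i) + Rmin (d k) (d i)) / 2)).
  unfold Rmax, Rmin; repeat destruct Rle_dec; lra.
Qed.

(* [K] is countable, so some point of [(p,q)] is no [b i]; its summand is non-empty. *)
Lemma os_lower_point p q : 0 <= p -> p < q -> q <= e ->
  exists i x, K i /\ p < x < q /\ a i <= x < b i.
Proof.
  intros Hp Hpq Hq; destruct Hdata as [_ [_ [_ [_ [Hcover _]]]]].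
  destruct (exists_avoiding_sequence b p q ltac:(lra)) as [x [Hx Hnb]].
  destruct (Hcover x ltac:(lra)) as [i [Hi Hxi]].
  exists i, x; split; [exact Hi|split; [exact Hx|]].
  specialize (Hnb i); lra.
Qed.

Lemma os_upper_point p q : e <= p -> p < q -> q <= 1 ->
  exists i x, K i /\ p < x < q /\ c i < x <= d i.
Proof.
  intros Hp Hpq Hq; destruct Hdata as [_ [_ [_ [_ [_ [Hcover _]]]]]].
  destruct (exists_avoiding_sequence c p q ltac:(lra)) as [x [Hx Hnc]].
  destruct (Hcover x ltac:(lra)) as [i [Hi Hxi]].
  exists i, x; split; [exact Hi|split; [exact Hx|]].
  specialize (Hnc i); lra.
Qed.

Lemma os_order k i : K k -> K i -> (b i <= a k <-> d k <= c i).
Proof. destruct Hdata as [_ [_ [_ [_ [_ [_ [Hord _]]]]]]]; auto. Qed.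


Section MinCase.
Hypothesis He1 : e < 1.
Hypothesis Hmixed : forall x y, e < x < 1 -> 0 < y < e -> U x y = y.
Hypothesis Hone : forall x, 0 < x <= 1 -> U x 1 = 1.
Hypothesis Hnoidem : forall x, e < x < 1 -> ~ idempotent_point U x.

Lemma min_d_eq k : K k -> c k < d k -> d k = 1.
Proof.
  intros Hk Hlt; pose proof (os_bounds k Hk).
  destruct (Rlt_dec (d k) 1) as [Hd|Hd]; [|lra].
  exfalso; apply (Hnoidem (d k)); [lra|].
  exact (os_idempotent_top k Hk Hlt).
Qed.

Lemma min_b_eq k : K k -> c k < d k -> b k = e.
Proof.
  intros Hk Hlt; pose proof (os_bounds k Hk); pose proof (min_d_eq k Hk Hlt).
  destruct (Rlt_dec (b k) e) as [Hb|Hb]; [|lra].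
  set (x := (c k + 1) / 2); set (y := (b k + e) / 2).
  assert (U x y = x) by (apply (os_absorb k _ _ Hk); unfold x, y; lra).
  assert (U x y = y) by (apply Hmixed; unfold x, y; lra).
  unfold x, y in *; lra.
Qed.

Lemma min_c_eq k : K k -> c k < d k -> c k = e.
Proof.
  intros Hk Hlt; pose proof (os_bounds k Hk); pose proof (min_d_eq k Hk Hlt).
  destruct (Rlt_dec e (c k)) as [Hc|Hc]; [|lra].
  destruct (os_upper_point e (c k) ltac:(lra) Hc ltac:(lra)) as [i [x [Hi [Hx Hxi]]]].
  pose proof (os_bounds i Hi); pose proof (min_d_eq i Hi ltac:(lra)).
  destruct (os_upper_disjoint k i Hk Hi ltac:(intros ->; lra) Hlt ltac:(lra)); lra.
Qed.

(* A non-empty lower half left of [a k] has its upper half right of [d k = 1]; then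
   [c i = 1] makes [U t 1 = t] on [(a i, b i)]. *)
Lemma min_a_eq k : K k -> c k < d k -> a k = 0.
Proof.
  intros Hk Hlt; pose proof (os_bounds k Hk); pose proof (min_d_eq k Hk Hlt).
  destruct (Rlt_dec 0 (a k)) as [Ha|Ha]; [|lra].
  destruct (os_lower_point 0 (a k) ltac:(lra) Ha ltac:(lra)) as [i [x [Hi [Hx Hxi]]]].
  pose proof (os_bounds i Hi).
  assert (Hba : b i <= a k).
  { destruct (Rle_dec (b i) (a k)) as [|Hba]; [assumption|exfalso].
    pose proof (min_b_eq k Hk Hlt).
    destruct (os_lower_disjoint k i Hk Hi ltac:(intros ->; lra) ltac:(lra) ltac:(lra));
      lra. }
  apply (os_order k i Hk Hi) in Hba.
  set (t := (a i + b i) / 2).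
  assert (U t 1 = t) by (apply (os_absorb i _ _ Hi); unfold t; lra).
  assert (U t 1 = 1) by (apply Hone; unfold t; lra).
  unfold t in *; lra.
Qed.

Lemma min_summand_full k : K k -> a k < b k \/ c k < d k ->
  a k = 0 /\ b k = e /\ c k = e /\ d k = 1.
Proof.
  intros Hk Hne; pose proof (os_bounds k Hk).
  assert (Hup : c k < d k).
  { destruct (Rlt_dec (c k) (d k)) as [Hlt|Hlt]; [exact Hlt|exfalso].
    destruct (os_upper_point e 1 ltac:(lra) ltac:(lra) ltac:(lra)) as [i [x [Hi [Hx Hxi]]]].
    pose proof (os_bounds i Hi).
    pose proof (min_a_eq i Hi ltac:(lra)); pose proof (min_b_eq i Hi ltac:(lra)).
    destruct (os_lower_disjoint k i Hk Hi ltac:(intros ->; lra) ltac:(lra) ltac:(lra));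
      lra. }
  repeat split; auto using min_a_eq, min_b_eq, min_c_eq, min_d_eq.
Qed.

End MinCase.

Section MaxCase.
Hypothesis He0 : 0 < e.
Hypothesis Hmixed : forall x y, 0 < x < e -> e < y < 1 -> U x y = y.
Hypothesis Hzero : forall x, 0 <= x < 1 -> U x 0 = 0.
Hypothesis Hnoidem : forall x, 0 < x < e -> ~ idempotent_point U x.

Lemma max_a_eq k : K k -> a k < b k -> a k = 0.
Proof.
  intros Hk Hlt; pose proof (os_bounds k Hk).
  destruct (Rlt_dec 0 (a k)) as [Ha|Ha]; [|lra].
  exfalso; apply (Hnoidem (a k)); [lra|].
  exact (os_idempotent_bot k Hk Hlt).
Qed.

Lemma max_c_eq k : K k -> a k < b k -> c k = e.
Proof.
  intros Hk Hlt; pose proof (os_bounds k Hk); pose proof (max_a_eq k Hk Hlt).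
  destruct (Rlt_dec e (c k)) as [Hc|Hc]; [|lra].
  set (x := b k / 2); set (y := (e + c k) / 2).
  assert (U x y = x) by (apply (os_absorb k _ _ Hk); unfold x, y; lra).
  assert (U x y = y) by (apply Hmixed; unfold x, y; lra).
  unfold x, y in *; lra.
Qed.

Lemma max_b_eq k : K k -> a k < b k -> b k = e.
Proof.
  intros Hk Hlt; pose proof (os_bounds k Hk); pose proof (max_a_eq k Hk Hlt).
  destruct (Rlt_dec (b k) e) as [Hb|Hb]; [|lra].
  destruct (os_lower_point (b k) e ltac:(lra) Hb ltac:(lra)) as [i [x [Hi [Hx Hxi]]]].
  pose proof (os_bounds i Hi); pose proof (max_a_eq i Hi ltac:(lra)).
  destruct (os_lower_disjoint k i Hk Hi ltac:(intros ->; lra) Hlt ltac:(lra)); lra.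
Qed.

Lemma max_d_eq k : K k -> a k < b k -> d k = 1.
Proof.
  intros Hk Hlt; pose proof (os_bounds k Hk); pose proof (max_a_eq k Hk Hlt).
  destruct (Rlt_dec (d k) 1) as [Hd|Hd]; [|lra].
  destruct (os_upper_point (d k) 1 ltac:(lra) Hd ltac:(lra)) as [i [x [Hi [Hx Hxi]]]].
  pose proof (os_bounds i Hi).
  assert (Hdc : d k <= c i).
  { destruct (Rle_dec (d k) (c i)) as [|Hdc]; [assumption|exfalso].
    pose proof (max_c_eq k Hk Hlt).
    destruct (os_upper_disjoint k i Hk Hi ltac:(intros ->; lra) ltac:(lra) ltac:(lra));
      lra. }
  apply (os_order k i Hk Hi) in Hdc.
  set (t := (c i + d i) / 2).
  assert (U t 0 = t) by (apply (os_absorb i _ _ Hi); unfold t; lra).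
  assert (U t 0 = 0) by (apply Hzero; unfold t; lra).
  unfold t in *; lra.
Qed.

Lemma max_summand_full k : K k -> a k < b k \/ c k < d k ->
  a k = 0 /\ b k = e /\ c k = e /\ d k = 1.
Proof.
  intros Hk Hne; pose proof (os_bounds k Hk).
  assert (Hlow : a k < b k).
  { destruct (Rlt_dec (a k) (b k)) as [Hlt|Hlt]; [exact Hlt|exfalso].
    destruct (os_lower_point 0 e ltac:(lra) ltac:(lra) ltac:(lra)) as [i [x [Hi [Hx Hxi]]]].
    pose proof (os_bounds i Hi).
    pose proof (max_c_eq i Hi ltac:(lra)); pose proof (max_d_eq i Hi ltac:(lra)).
    destruct (os_upper_disjoint k i Hk Hi ltac:(intros ->; lra) ltac:(lra) ltac:(lra));
      lra. }
  repeat split; auto using max_a_eq, max_b_eq, max_c_eq, max_d_eq.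
Qed.

End MaxCase.

End OrdinalSum.

Theorem proposition9 (U : R -> R -> R) (e : R) :
  0 < e < 1 ->
  uninorm U e ->
  in_calU U e ->
  ((in_Nmin U /\ (forall x, e < x < 1 -> ~ idempotent_point U x)) \/
   (in_Nmax U /\ (forall x, 0 < x < e -> ~ idempotent_point U x))) ->
  irreducible U e.
Proof.
  intros He Hu _ Hcase K a b c d W ew v Hdata _ Hsum k Hk Hne.
  destruct Hcase as [[HNmin Hnoidem] | [HNmax Hnoidem]].
  - apply (min_summand_full U e K a b c d W ew v Hdata Hsum (proj2 He)
             (Nmin_mixed U e He Hu HNmin) (proj2 (proj1 HNmin)) Hnoidem k Hk Hne).
  - apply (max_summand_full U e K a b c d W ew v Hdata Hsum (proj1 He)
             (Nmax_mixed U e He Hu HNmax) (proj1 (proj1 HNmax)) Hnoidem k Hk Hne).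
Qed.
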